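(* Let $(X_t)_{t\in\mathbb{N}}$ be i.i.d. real random variables on a probability space $(\Omega,\mathcal{F},\mathbb{P})$ with $\mathbb{E}[|X_1|]<\infty$ and $\mathbb{E}[X_1]=0$, and define $r(K)=\mathbb{E}\big[|X_1|\mathbf{1}_{\{|X_1|>K\}}\big]$ for $K\ge0$. Then for all $\varepsilon>0$, $\gamma>0$ and $K\ge1$, $$\mathbb{P}\Big(\sup_{t\in\mathbb{N}}\frac{1}{\gamma+t}\Big|\sum_{s=1}^tX_s\Big| > \varepsilon + r(K)\Big) \le \frac{8K^2}{\gamma\varepsilon^2} + \Big(\frac{16}{\varepsilon^2}+2\Big)r(K).$$ *)

From HB Require Import structures.
From mathcomp Require Import all_boot all_order all_algebra.
From mathcomp Require Import all_classical all_reals all_analysis.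
Set Implicit Arguments. Unset Strict Implicit. Unset Printing Implicit Defensive.
Import Order.TTheory GRing.Theory Num.Theory.
Local Open Scope classical_set_scope.
Local Open Scope ring_scope.

Definition mutually_independent d (T : measurableType d) (R : realType)
  (P : probability T R) (X : nat -> {RV P >-> R}) : Prop :=
  forall (s : seq nat) (B : nat -> set R), uniq s ->
    (forall i, measurable (B i)) ->
    P (\bigcap_(i in [set i | i \in s]) (X i @^-1` B i)) =
    (\prod_(i <- s) P (X i @^-1` B i))%E.

Definition identically_distributed d (T : measurableType d) (R : realType)
  (P : probability T R) (X : nat -> {RV P >-> R}) : Prop :=
  forall (t : nat) (B : set R), measurable B ->
    P (X t @^-1` B) = P (X 0%N @^-1` B).

Definition iid d (T : measurableType d) (R : realType)
  (P : probability T R) (X : nat -> {RV P >-> R}) : Prop :=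
  mutually_independent X /\ identically_distributed X.

Definition tail_mean d (T : measurableType d) (R : realType)
  (P : probability T R) (Y : {RV P >-> R}) (K : R) : \bar R :=
  (\int[P]_(w in [set w | (K < `|Y w|)%R]) (`|Y w|)%:E)%E.

From mathcomp Require Import all_boot all_order all_algebra.
From mathcomp Require Import all_classical all_reals all_analysis.
From mathcomp Require Import ring lra measurable_realfun.
Set Implicit Arguments.
Unset Strict Implicit.
Unset Printing Implicit Defensive.
Import Order.TTheory GRing.Theory Num.Theory.
Local Open Scope classical_set_scope.
Local Open Scope ring_scope.

(* Truncate [X s] at the level [max K (gamma + s + 1)], round it down in
   absolute value to the grid [(eps / 4) Z] and center it.  The resulting
   variables take finitely many values, so the product rule defining
   independence suffices for a backward recursion over the time horizon that
   proves a Hajek-Renyi maximal inequality: their weighted partial sums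
   [(gamma + t)^-1 * \sum_(s < t)] exceed [eps / 2] with probability at most
   [(K^2 / gamma + 3 r(K)) / (eps / 2)^2].  As long as no [X s] exceeds its
   level, truncating, rounding and centering move each summand by at most
   [eps / 2 + r(K)], and some [X s] exceeds its level with probability at most
   [\sum_s P(K < |X_1|, gamma + s + 1 < |X_1|) <= E[|X_1| 1_{|X_1| > K}]]. *)

Section weight_sums.
Variable R : realType.
Implicit Types b g x y : R.

Lemma sqr_invDr1_le b : 0 < b -> (b + 1)^-1 ^+ 2 <= b^-1 - (b + 1)^-1.
Proof.
move=> b0; have b1 : 0 < b + 1 by lra.
have u0 : 0 < b^-1 by rewrite invr_gt0.
have v0 : 0 < (b + 1)^-1 by rewrite invr_gt0.
have hu : b * b^-1 = 1 by rewrite mulfV ?gt_eqF.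
have hv : (b + 1) * (b + 1)^-1 = 1 by rewrite mulfV ?gt_eqF.
set u := b^-1 in u0 hu *; set v := (b + 1)^-1 in v0 hv *.
nra.
Qed.

Lemma sum_sqr_inv_le g n : 0 < g ->
  \sum_(s < n) (g + s.+1%:R)^-1 ^+ 2 <= g^-1.
Proof.
move=> g0.
suff : \sum_(s < n) (g + s.+1%:R)^-1 ^+ 2 <= g^-1 - (g + n%:R)^-1.
  have : 0 < (g + n%:R)^-1 by rewrite invr_gt0 ltr_wpDr.
  lra.
elim: n => [|n IH]; first by rewrite big_ord0 addr0 subrr.
rewrite big_ord_recr /= -natr1 addrA.
have gn : 0 < g + n%:R by rewrite ltr_wpDr.
have := sqr_invDr1_le gn; lra.
Qed.

Lemma sum_sqr_inv_ge_le g x n : 0 < g -> 1 <= x ->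
  \sum_(s < n) (if x <= g + s.+1%:R then (g + s.+1%:R)^-1 ^+ 2 else 0)
  <= 3 * x^-1.
Proof.
move=> g0 x1; have x0 : 0 < x by lra.
have xi0 : 0 < x^-1 by rewrite invr_gt0.
have xi1 : x^-1 <= 1 by rewrite invf_le1.
(* The sum up to [g + n = y] is at most [G y]: no term counts before [x] is
   reached, the first one is at most [x^-2] and the others telescope. *)
pose G y := if y < x then 0 else x^-1 ^+ 2 + 2 * x^-1 - 2 * y^-1.
have G_le y : 0 < y -> G y <= 3 * x^-1.
  move=> y0; rewrite /G; case: ifP => _; first lra.
  have : 0 < y^-1 by rewrite invr_gt0.
  nra.
suff : \sum_(s < n) (if x <= g + s.+1%:R then (g + s.+1%:R)^-1 ^+ 2 else 0)
   <= G (g + n%:R).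
  by move/le_trans; apply; apply: G_le; rewrite ltr_wpDr.
elim: n => [|n IH].
  rewrite big_ord0 addr0 /G; case: ifPn => //; rewrite -leNgt => xg.
  have : g^-1 <= x^-1 by rewrite lef_pV2 ?posrE.
  have : 0 <= x^-1 ^+ 2 by apply: sqr_ge0.
  lra.
rewrite big_ord_recr /=.
set y := g + n%:R in IH *.
have y0 : 0 < y by rewrite /y ltr_wpDr.
have -> : g + n.+1%:R = y + 1 by rewrite /y -natr1 addrA.
have y1 : 0 < y + 1 by lra.
have step : (y + 1)^-1 ^+ 2 <= 2 * y^-1 - 2 * (y + 1)^-1.
  have := sqr_invDr1_le y0.
  have : (y + 1)^-1 <= y^-1 by rewrite lef_pV2 ?posrE; lra.
  have : 0 < (y + 1)^-1 by rewrite invr_gt0.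
  nra.
move: IH; rewrite /G.
have [yx|yx] := ltP y x; have [xy|xy] := leP x (y + 1).
- move=> IH.
  have h1 : (y + 1)^-1 <= x^-1 by rewrite lef_pV2 ?posrE.
  have h2 : 0 < (y + 1)^-1 by rewrite invr_gt0.
  have : (y + 1)^-1 ^+ 2 <= x^-1 ^+ 2.
    by rewrite lerXn2r ?nnegrE; lra.
  lra.
- lra.
- lra.
- lra.
Qed.

Lemma sum_lt_indicator_le y n : 0 <= y ->
  \sum_(s < n) (if s.+1%:R < y then 1 else 0) <= y :> R.
Proof.
move=> y0.
suff : \sum_(s < n) (if s.+1%:R < y then 1 else 0) <= y /\
       \sum_(s < n) (if s.+1%:R < y then 1 else 0) <= n%:R :> R by case.
elim: n => [|n [IH1 IH2]]; first by rewrite big_ord0.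
rewrite big_ord_recr /= -natr1; case: ifP => h; split; lra.
Qed.

End weight_sums.

Section measure_lemmas.
Context {d : measure_display} {T : measurableType d} {R : realType}.

Lemma measurable_gt_fun (f : T -> R) (a : R) :
  measurable_fun setT f -> measurable [set x | a < f x].
Proof.
move=> mf; have := mf measurableT _ (measurable_itv `]a, +oo[).
rewrite setTI; congr measurable; apply/seteqP; split => x /=;
  by rewrite in_itv /= andbT.
Qed.

Lemma measure_bigsetU_seq_le (mu : {measure set T -> \bar R}) (I : Type)
    (s : seq I) (F : I -> set T) : (forall i, measurable (F i)) ->
  (mu (\big[setU/set0]_(i <- s) F i) <= \sum_(i <- s) mu (F i))%E.
Proof.
move=> mF; elim: s => [|i s IH]; first by rewrite !big_nil measure0.
rewrite !big_cons; apply: le_trans (measureU2 _ (mF i) _) _.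
  by apply: bigsetU_measurable => k _; exact: mF.
exact: leeD.
Qed.

Lemma probability_integral_cst (P : probability T R) (c : R) :
  (\int[P]_w c%:E = c%:E)%E.
Proof.
rewrite integral_cst // -[RHS]mule1; congr (_ * _)%E; exact: probability_setT.
Qed.

Lemma integral_finite_range (P : probability T R) (Y : {RV P >-> R})
    (f : R -> R) (V : seq R) (h : R -> R) :
  measurable_fun setT f -> uniq V -> (forall x, f x \in V) ->
  (\int[P]_w (h (f (Y w)))%:E =
   (\sum_(v <- V) h v * fine (P (Y @^-1` (f @^-1` [set v]))))%:E)%E.
Proof.
move=> mf uV fV.
have mA v : measurable (Y @^-1` (f @^-1` [set v])).
  apply: measurable_funPTI.
  by have := mf measurableT [set v] (measurable_set1 v); rewrite setTI.
have hE w : h (f (Y w)) =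
    \sum_(v <- V) h v * \1_(Y @^-1` (f @^-1` [set v])) w.
  rewrite (bigD1_seq (f (Y w))) //= indicE mem_set // mulr1.
  rewrite big1 ?addr0 // => v /negbTE fYv; rewrite indicE memNset ?mulr0 //=.
  by move=> fYv'; rewrite fYv' eqxx in fYv.
under eq_integral do rewrite hE -sumEFin.
rewrite integral_sum //; last first.
  move=> v; under eq_fun do rewrite EFinM.
  by apply: integrableZl => //; exact: integrable_indic.
rewrite -sumEFin; apply: eq_bigr => v _.
under eq_integral do rewrite EFinM.
rewrite integralZl //; last exact: integrable_indic.
by rewrite integral_indic // setIT EFinM fineK // fin_num_measure.
Qed.

End measure_lemmas.

Section tail_independence.
Context {d : measure_display} {T : measurableType d} {R : realType}
  {P : probability T R} (X : nat -> {RV P >-> R}).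

Definition indep_of_tail (j : nat) (A : set T) : Prop :=
  measurable A /\ forall (s : seq nat) (B : nat -> set R), uniq s ->
    (forall i, i \in s -> (j <= i)%N) -> (forall i, measurable (B i)) ->
    P (A `&` \bigcap_(i in [set i | i \in s]) (X i @^-1` B i)) =
    (P A * \prod_(i <- s) P (X i @^-1` B i))%E.

Lemma indep_of_tail0 : mutually_independent X -> indep_of_tail 0 setT.
Proof.
move=> hind; split => [|s B us _ mB]; first exact: measurableT.
by rewrite setTI probability_setT mul1e; exact: hind.
Qed.

Lemma indep_of_tail_mul j A B : indep_of_tail j A -> measurable B ->
  P (A `&` X j @^-1` B) = (P A * P (X j @^-1` B))%E.
Proof.
move=> [_ hA] mB; have := hA [:: j] (fun=> B) erefl _ (fun=> mB).
have -> : [set i | i \in [:: j]] = [set j].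
  by apply/seteqP; split => i /=; rewrite inE => /eqP.
by rewrite bigcap_set1 big_seq1; apply => i; rewrite inE => /eqP ->.
Qed.

Lemma indep_of_tailS j A B : indep_of_tail j A -> measurable B ->
  indep_of_tail j.+1 (A `&` X j @^-1` B).
Proof.
move=> hA mB; have [mA hAs] := hA; split.
  by apply: measurableI => //; exact: measurable_funPTI.
move=> s B' us hs mB'.
have js : j \notin s by apply/negP => /hs; rewrite ltnn.
pose B'' i := if i == j then B else B' i.
have := hAs (j :: s) B'' _ _ _; rewrite /= js us => /(_ erefl).
have -> : A `&` \bigcap_(i in [set i | i \in j :: s]) X i @^-1` B'' i =
   A `&` X j @^-1` B `&` \bigcap_(i in [set i | i \in s]) X i @^-1` B' i.
  apply/seteqP; split => w /=.
  - move=> [Aw H]; split; first split => //.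
      by have := H j; rewrite /B'' eqxx; apply; exact: mem_head.
    move=> i si; have := H i; rewrite /B''.
    case: eqP => [ij|_]; first by move: js; rewrite -ij si.
    by apply; rewrite /= inE si orbT.
  - move=> [[Aw Bw] H]; split => // i; rewrite /= inE /B''.
    by case: eqP => [->//|_] /= si; exact: H.
rewrite big_cons /B'' eqxx.
rewrite (eq_big_seq (fun i => P (X i @^-1` B' i))); last first.
  by move=> i si; case: eqP => // ij; move: js; rewrite -ij si.
move=> ->; first by rewrite (indep_of_tail_mul hA mB) muleA.
- by move=> i; rewrite inE => /orP[/eqP->//|/hs/ltnW].
- by move=> i; rewrite /B''; case: eqP.
Qed.

End tail_independence.

Section discrete_hajek_renyi.
Context {d : measure_display} {T : measurableType d} {R : realType}
  {P : probability T R} (X : nat -> {RV P >-> R}).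
Variables (n : nat) (e : R) (w : nat -> R) (f : nat -> R -> R)
  (V : nat -> seq R).
Hypotheses (e_gt0 : 0 < e) (w_gt0 : forall t, 0 < w t)
  (w_nonincr : forall t, w t.+1 <= w t)
  (mf : forall s, measurable_fun setT (f s))
  (f_range : forall s x, f s x \in V s).

Definition mass s v := fine (P (X s @^-1` (f s @^-1` [set v]))).

Hypotheses (mass_sum1 : forall s, \sum_(v <- V s) mass s v = 1)
  (mass_mean0 : forall s, \sum_(v <- V s) mass s v * v = 0).

Definition sigma2 s := \sum_(v <- V s) mass s v * v ^+ 2.

(* [x] stands for the partial sum [\sum_(s < j) f s (X s om)] accumulated
   before time [j]. *)
Definition exceed j x := [set om | exists t, (j <= t <= n)%N /\
  e < w t * `|x + \sum_(j <= s < t) f s (X s om)|].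

Definition hr_bound j x :=
  (w j ^+ 2 * x ^+ 2 + \sum_(j <= s < n) w s.+1 ^+ 2 * sigma2 s) / e ^+ 2.

Lemma mass_ge0 s v : 0 <= mass s v.
Proof. exact/fine_ge0/measure_ge0. Qed.

Lemma measurable_f_preimage s v : measurable (f s @^-1` [set v]).
Proof. by have := @mf s measurableT [set v] (measurable_set1 v); rewrite setTI. Qed.

Lemma sigma2_ge0 s : 0 <= sigma2 s.
Proof.
by apply: sumr_ge0 => v _; apply: mulr_ge0; [exact: mass_ge0|exact: sqr_ge0].
Qed.

Lemma weighted_sigma2_sum_ge0 j : 0 <= \sum_(j <= s < n) w s.+1 ^+ 2 * sigma2 s.
Proof.
rewrite big_seq_cond; apply: sumr_ge0 => s _.
by apply: mulr_ge0; [exact: sqr_ge0|exact: sigma2_ge0].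
Qed.

Lemma hr_bound_ge0 j x : 0 <= hr_bound j x.
Proof.
apply: divr_ge0; last exact: sqr_ge0.
by apply: addr_ge0; [apply: mulr_ge0; exact: sqr_ge0|exact: weighted_sigma2_sum_ge0].
Qed.

Lemma hr_bound_ge1 j x : e < w j * `|x| -> 1 <= hr_bound j x.
Proof.
move=> hx; rewrite /hr_bound ler_pdivlMr ?exprn_gt0 // mul1r.
have : e ^+ 2 < w j ^+ 2 * x ^+ 2.
  have w0 := w_gt0 j.
  rewrite -[x ^+ 2]real_normK ?num_real // -exprMn ltr_pXn2r // ?nnegrE ?ltW //.
  exact: lt_trans e_gt0 hx.
have := weighted_sigma2_sum_ge0 j; lra.
Qed.

Lemma measurable_exceed j x : measurable (exceed j x).
Proof.
have -> : exceed j x = \bigcup_(t in [set t | (j <= t <= n)%N])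
    [set om | e < w t * `|x + \sum_(j <= s < t) f s (X s om)|].
  by apply/seteqP; split=> om /=; [case=> t [] | case=> t]; exists t.
apply: bigcup_measurable => t _; apply: measurable_gt_fun.
apply: measurable_funM; first exact: measurable_cst.
apply: measurableT_comp => //; apply: measurable_funD => //.
apply: measurable_sum => s.
exact: measurableT_comp (mf s) (measurable_funPT (X s)).
Qed.

(* Since the increment [f j (X j)] is centered, averaging [hr_bound j.+1]
   over it cancels the cross term; the weights being nonincreasing then
   absorb the loss in the quadratic term. *)
Lemma hr_bound_step j x : (j < n)%N ->
  \sum_(v <- V j) mass j v * hr_bound j.+1 (x + v) <= hr_bound j x.
Proof.
move=> jn; rewrite [hr_bound j x]/hr_bound (big_ltn jn).
set C := \sum_(j.+1 <= s < n) w s.+1 ^+ 2 * sigma2 s.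
set a := w j.+1.
have -> : \sum_(v <- V j) mass j v * hr_bound j.+1 (x + v) =
  ((a ^+ 2 * x ^+ 2 + C) * \sum_(v <- V j) mass j v
   + (2 * a ^+ 2 * x) * \sum_(v <- V j) mass j v * v
   + a ^+ 2 * \sum_(v <- V j) mass j v * v ^+ 2) / e ^+ 2.
  rewrite !mulr_sumr -!big_split /= mulr_suml; apply: eq_bigr => v _.
  rewrite /hr_bound -/C -/a; ring.
rewrite mass_sum1 mass_mean0 -/(sigma2 j) mulr1 mulr0 addr0.
rewrite ler_pM2r ?invr_gt0 ?exprn_gt0 //.
have a0 : 0 < a by exact: w_gt0.
have aw : a <= w j by exact: w_nonincr.
have : a ^+ 2 <= w j ^+ 2 by rewrite lerXn2r ?nnegrE; lra.
have : 0 <= x ^+ 2 by exact: sqr_ge0.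
nra.
Qed.

Lemma exceed_horizon x : w n * `|x| <= e -> exceed n x = set0.
Proof.
move=> hx; apply/seteqP; split => om //= [t [/andP[nt tn] h]].
have tE : t = n by apply/eqP; rewrite eqn_leq nt tn.
by move: h; rewrite tE big_geq // addr0 ltNge hx.
Qed.

Lemma exceed_cover j x A : (j < n)%N -> w j * `|x| <= e ->
  A `&` exceed j x `<=` \big[setU/set0]_(v <- V j)
    (A `&` X j @^-1` (f j @^-1` [set v]) `&` exceed j.+1 (x + v)).
Proof.
move=> jn hx om [Aom [t [/andP[jt tn] h]]].
rewrite -bigcup_seq; exists (f j (X j om)); first exact: f_range.
split; first by split.
have jt' : (j < t)%N.
  rewrite ltn_neqAle jt andbT; apply/eqP => tj.
  by move: h; rewrite -tj big_geq // addr0 ltNge hx.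
exists t; split; first by rewrite jt' tn.
by move: h; rewrite (big_ltn jt') addrA.
Qed.

Lemma prob_indep_value j A v : indep_of_tail X j A ->
  P (A `&` X j @^-1` (f j @^-1` [set v])) = (fine (P A) * mass j v)%:E.
Proof.
move=> hA; have [mA _] := hA.
have mXv := measurable_funPTI (X j) (measurable_f_preimage j v).
rewrite (indep_of_tail_mul hA (measurable_f_preimage j v)) /mass.
by rewrite EFinM !fineK ?fin_num_measure.
Qed.

Lemma exceed_le_start j x A : measurable A -> e < w j * `|x| ->
  (P (A `&` exceed j x) <= P A * (hr_bound j x)%:E)%E.
Proof.
move=> mA hx; apply: le_trans (measureIl P mA (measurable_exceed j x)) _.
by apply: lee_pemulr; [exact: measure_ge0|rewrite lee_fin hr_bound_ge1].
Qed.

Lemma exceed_le j x A : (j <= n)%N -> indep_of_tail X j A ->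
  (P (A `&` exceed j x) <= P A * (hr_bound j x)%:E)%E.
Proof.
move=> /subnKC; move: (n - j)%N => k.
elim: k j x A => [|k IH] j x A hjk hA; have [mA _] := hA;
  have [big|small] := ltP e (w j * `|x|); try exact: exceed_le_start.
  rewrite addn0 in hjk; subst j.
  rewrite exceed_horizon // setI0 measure0.
  by apply: mule_ge0; [exact: measure_ge0|rewrite lee_fin hr_bound_ge0].
have jn : (j < n)%N by rewrite -hjk addnS ltnS leq_addr.
have hjk' : (j.+1 + k = n)%N by rewrite addSn -addnS.
pose Av v := A `&` X j @^-1` (f j @^-1` [set v]).
have hAv v : indep_of_tail X j.+1 (Av v).
  exact: indep_of_tailS hA (measurable_f_preimage j v).
have mAvE v : measurable (Av v `&` exceed j.+1 (x + v)).
  by apply: measurableI; [case: (hAv v)|exact: measurable_exceed].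
apply: le_trans (le_measure _ _ _ (exceed_cover jn small)) _.
- by rewrite inE; apply: measurableI => //; exact: measurable_exceed.
- by rewrite inE; apply: bigsetU_measurable => v _; exact: mAvE.
apply: le_trans (measure_bigsetU_seq_le _ _ mAvE) _.
apply: le_trans (lee_sum _ (fun v _ => IH j.+1 (x + v) (Av v) hjk' (hAv v))) _.
under eq_bigr do rewrite prob_indep_value // -EFinM -mulrA.
set a := fine (P A); have PA : P A = a%:E by rewrite fineK ?fin_num_measure.
rewrite sumEFin -mulr_sumr PA -EFinM lee_fin.
by rewrite ler_wpM2l ?fine_ge0 ?measure_ge0 // hr_bound_step.
Qed.

Theorem hajek_renyi_discrete : mutually_independent X ->
  (P (exceed 0 0) <= ((\sum_(s < n) w s.+1 ^+ 2 * sigma2 s) / e ^+ 2)%:E)%E.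
Proof.
move=> hind; have := exceed_le 0 (leq0n n) (indep_of_tail0 hind).
by rewrite setTI probability_setT mul1e /hr_bound expr0n /= mulr0 add0r big_mkord.
Qed.

End discrete_hajek_renyi.

Section grid_rounding.
Variables (R : realType) (dl : R).
Hypothesis dl_gt0 : 0 < dl.

Definition grid_floor (y : R) := dl * (Num.truncn (y / dl))%:R.

Lemma grid_floor_nondecreasing : {homo grid_floor : x y / x <= y}.
Proof.
move=> x y xy; rewrite /grid_floor ler_wpM2l ?(ltW dl_gt0) // ler_nat.
by apply: le_truncn; rewrite ler_pM2r ?invr_gt0.
Qed.

Lemma grid_floor_nonpos y : y <= 0 -> grid_floor y = 0.
Proof.
move=> y0; rewrite /grid_floor.
have : (Num.truncn (y / dl) <= 0)%N.
  have h : y / dl <= 0 by rewrite ler_pdivrMr // mul0r.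
  by rewrite truncn_le_nat; apply: le_lt_trans h _; exact: ltr0Sn.
by rewrite leqn0 => /eqP ->; rewrite mulr0.
Qed.

Lemma grid_floor_le y : 0 <= y -> grid_floor y <= y.
Proof.
move=> y0; rewrite /grid_floor mulrC -ler_pdivlMr //.
by rewrite truncn_le divr_ge0 // ltW.
Qed.

Lemma grid_floor_gt y : y - dl < grid_floor y.
Proof.
have := truncnS_gt (y / dl).
rewrite -natr1 ltr_pdivrMr // mulrDl mul1r /grid_floor mulrC; lra.
Qed.

Lemma grid_floor_ge0 y : 0 <= grid_floor y.
Proof. by rewrite /grid_floor mulr_ge0 // ltW. Qed.

Definition grid_round x := grid_floor x - grid_floor (- x).

Lemma grid_round_bounds x : `|x - grid_round x| <= dl /\ `|grid_round x| <= `|x|.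
Proof.
rewrite /grid_round; have [x0|x0] := leP 0 x.
  rewrite [grid_floor (- x)]grid_floor_nonpos ?oppr_le0 // subr0.
  have := grid_floor_le x0; have := grid_floor_gt x; have := grid_floor_ge0 x.
  rewrite (ger0_norm x0) (ger0_norm (grid_floor_ge0 x)).
  by split; [rewrite ler_norml; lra|lra].
rewrite [grid_floor x]grid_floor_nonpos; last exact: ltW.
rewrite sub0r normrN (ltr0_norm x0) (ger0_norm (grid_floor_ge0 (- x))).
have x0' : 0 <= - x by lra.
have := grid_floor_le x0'; have := grid_floor_gt (- x).
by split; [rewrite opprK ler_norml; lra|lra].
Qed.

Definition grid (c : R) : seq R :=
  [seq dl * i%:R | i <- iota 0 (Num.truncn (c / dl)).+1] ++
  [seq - (dl * i%:R) | i <- iota 0 (Num.truncn (c / dl)).+1].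

Lemma mem_grid0 c : 0 \in grid c.
Proof.
rewrite mem_cat; apply/orP; left; apply/mapP; exists 0%N; last by rewrite mulr0.
by rewrite mem_iota.
Qed.

Lemma grid_round_in_grid c x : `|x| <= c -> grid_round x \in grid c.
Proof.
move=> xc; rewrite /grid_round mem_cat; have [x0|x0] := leP 0 x.
  rewrite [grid_floor (- x)]grid_floor_nonpos ?oppr_le0 // subr0.
  apply/orP; left; apply/mapP; exists (Num.truncn (x / dl)) => //.
  rewrite mem_iota add0n ltnS le_truncn // ler_pM2r ?invr_gt0 //.
  by rewrite -(ger0_norm x0).
rewrite [grid_floor x]grid_floor_nonpos ?sub0r; last exact: ltW.
apply/orP; right; apply/mapP; exists (Num.truncn (- x / dl)) => //.
rewrite mem_iota add0n ltnS le_truncn // ler_pM2r ?invr_gt0 //.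
by rewrite -(ltr0_norm x0).
Qed.

Definition trunc_round (c x : R) := if `|x| <= c then grid_round x else 0.

Lemma trunc_round_in_grid c x : trunc_round c x \in grid c.
Proof.
by rewrite /trunc_round; case: ifP => [|_]; [exact: grid_round_in_grid|exact: mem_grid0].
Qed.

Lemma measurable_trunc_round c : measurable_fun setT (trunc_round c).
Proof.
have mfloor : measurable_fun setT grid_floor.
  exact: nondecreasing_measurable grid_floor_nondecreasing.
apply: measurable_fun_ifT.
- by apply: measurable_fun_ler => //; exact: normr_measurable.
- apply: measurable_funB => //; apply: (measurableT_comp mfloor).
  exact: measurable_funN.
- exact: measurable_cst.
Qed.

End grid_rounding.

Definition tail_part (R : realType) (K x : R) := if K < `|x| then `|x| else 0.

Lemma tail_part_ge0 (R : realType) (K x : R) : 0 <= tail_part K x.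
Proof. by rewrite /tail_part; case: ifP. Qed.

Section tail_mean.
Context {d : measure_display} {T : measurableType d} {R : realType}
  {P : probability T R} (Y : {RV P >-> R}) (K : R).

Lemma measurable_tail_part : measurable_fun setT (fun w => tail_part K (Y w)).
Proof.
have mY : measurable_fun setT (fun w => `|Y w|) by exact: measurableT_comp.
by apply: measurable_fun_ifT => //; exact: measurable_fun_ltr.
Qed.

Lemma tail_meanE : tail_mean Y K = (\int[P]_w (tail_part K (Y w))%:E)%E.
Proof.
rewrite /tail_mean integral_mkcond; apply: eq_integral => w _.
rewrite patchE /tail_part; case: ifPn => [/set_mem -> //|].
by case: ifPn => // h /negP[]; exact: mem_set.
Qed.

Lemma tail_mean_ge0 : (0 <= tail_mean Y K)%E.
Proof.
by rewrite tail_meanE; apply: integral_ge0 => w _; rewrite lee_fin tail_part_ge0.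
Qed.

Lemma tail_mean_fin_num : P.-integrable setT (EFin \o Y) ->
  tail_mean Y K \is a fin_num.
Proof.
move=> intY; rewrite tail_meanE; apply: integrable_fin_num => //.
apply: le_integrable intY => //; first exact/measurable_EFinP/measurable_tail_part.
move=> w _ /=; rewrite lee_fin /tail_part.
by case: ifP => _; rewrite ?normr_id ?normr0.
Qed.

End tail_mean.

Section maximal_inequality.
Context {d : measure_display} {T : measurableType d} {R : realType}
  {P : probability T R} (X : nat -> {RV P >-> R}).
Hypotheses (hind : mutually_independent X) (hid : identically_distributed X)
  (hint : P.-integrable setT (EFin \o X 0%N))
  (hmean : ('E_P[X 0%N] = 0)%E).
Variables (eps gamma K : R).
Hypotheses (eps_gt0 : 0 < eps) (gamma_gt0 : 0 < gamma) (K_ge1 : 1 <= K).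

(* The level [gamma + s] makes the truncated second moments summable against
   the weights [(gamma + s)^-2], while the chance that some [X s] exceeds its
   level is still at most [r] (see [count_level_lt_le]). *)
Let level s := Num.max K (gamma + s.+1%:R).
Let dl := eps / 4.
Let r := fine (tail_mean (X 0) K).
Let rnd s := trunc_round dl (level s).
Let rnd_values s := undup (grid dl (level s)).
Let rnd_law s u := fine (P (X 0 @^-1` (rnd s @^-1` [set u]))).
Let rnd_mean s := \sum_(u <- rnd_values s) u * rnd_law s u.
Let rnd_moment2 s := \sum_(u <- rnd_values s) u ^+ 2 * rnd_law s u.
Let centered s x := rnd s x - rnd_mean s.
Let centered_values s := undup [seq u - rnd_mean s | u <- grid dl (level s)].
Let weight t := (gamma + t%:R)^-1.
Let over_level n := [set om | exists2 s, (s < n)%N & level s < `|X s om|].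
Let big_sum n := exceed X n (eps / 2) weight centered 0 0.
Let sup_event := [set om | (eps%:E + tail_mean (X 0%N) K <
  ereal_sup [set ((gamma + t%:R)^-1 * `|\sum_(s < t) X s om|)%:E
             | t in [set t : nat | (1 <= t)%N]])%E].

Lemma dl_gt0 : 0 < dl. Proof. by rewrite /dl divr_gt0. Qed.

Lemma level_geK s : K <= level s. Proof. by rewrite /level le_max lexx. Qed.

Lemma level_ge s : gamma + s.+1%:R <= level s.
Proof. by rewrite /level le_max lexx orbT. Qed.

Lemma tail_mean_X0 : tail_mean (X 0) K = r%:E.
Proof. by rewrite /r fineK // tail_mean_fin_num. Qed.

Lemma r_ge0 : 0 <= r.
Proof. exact/fine_ge0/tail_mean_ge0. Qed.

Lemma measurable_rnd s : measurable_fun setT (rnd s).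
Proof. exact: measurable_trunc_round dl_gt0 _. Qed.

Lemma measurable_centered s : measurable_fun setT (centered s).
Proof. by apply: measurable_funB => //; exact: measurable_rnd. Qed.

Lemma rnd_in_values s x : rnd s x \in rnd_values s.
Proof. by rewrite mem_undup; exact: trunc_round_in_grid dl_gt0 _ _. Qed.

Lemma centered_in_values s x : centered s x \in centered_values s.
Proof.
rewrite mem_undup; apply: (map_f (fun u => u - rnd_mean s)).
exact: trunc_round_in_grid dl_gt0 _ _.
Qed.

Lemma integral_rnd s (h : R -> R) :
  (\int[P]_w (h (rnd s (X 0 w)))%:E =
   (\sum_(u <- rnd_values s) h u * rnd_law s u)%:E)%E.
Proof. exact: integral_finite_range (measurable_rnd s) (undup_uniq _) (rnd_in_values s). Qed.

Lemma integral_centered s (h : R -> R) :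
  (\int[P]_w (h (centered s (X 0 w)))%:E =
   (\sum_(v <- centered_values s)
      h v * fine (P (X 0 @^-1` (centered s @^-1` [set v]))))%:E)%E.
Proof.
exact: integral_finite_range (measurable_centered s) (undup_uniq _)
  (centered_in_values s).
Qed.

Lemma rnd_law_sum1 s : \sum_(u <- rnd_values s) rnd_law s u = 1.
Proof.
apply: EFin_inj; rewrite -(probability_integral_cst P 1) (integral_rnd s (fun=> 1)).
by congr (_%:E); apply: eq_bigr => u _; rewrite mul1r.
Qed.

Lemma centered_massE s v : mass X centered s v =
  fine (P (X 0 @^-1` (centered s @^-1` [set v]))).
Proof. by rewrite /mass hid //; exact: measurable_f_preimage measurable_centered s v. Qed.

Lemma centered_mass_sum1 s :
  \sum_(v <- centered_values s) mass X centered s v = 1.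
Proof.
under eq_bigr do rewrite centered_massE.
apply: EFin_inj; rewrite -(probability_integral_cst P 1) (integral_centered s (fun=> 1)).
by congr (_%:E); apply: eq_bigr => u _; rewrite mul1r.
Qed.

Lemma centered_mass_mean0 s :
  \sum_(v <- centered_values s) mass X centered s v * v = 0.
Proof.
under eq_bigr do rewrite centered_massE mulrC.
have -> : \sum_(v <- centered_values s)
    v * fine (P (X 0 @^-1` (centered s @^-1` [set v]))) =
    \sum_(u <- rnd_values s) (u - rnd_mean s) * rnd_law s u.
  apply: EFin_inj; rewrite -(integral_centered s id).
  by rewrite -(integral_rnd s (fun u => u - rnd_mean s)).
under eq_bigr do rewrite mulrBl.
by rewrite sumrB -mulr_sumr rnd_law_sum1 mulr1 subrr.
Qed.

Lemma sigma2_le_moment2 s :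
  sigma2 X centered centered_values s <= rnd_moment2 s.
Proof.
rewrite /sigma2; under eq_bigr do rewrite centered_massE mulrC.
have -> : \sum_(v <- centered_values s)
    v ^+ 2 * fine (P (X 0 @^-1` (centered s @^-1` [set v]))) =
    \sum_(u <- rnd_values s) (u - rnd_mean s) ^+ 2 * rnd_law s u.
  apply: EFin_inj; rewrite -(integral_centered s (fun v => v ^+ 2)).
  by rewrite -(integral_rnd s (fun u => (u - rnd_mean s) ^+ 2)).
have -> : \sum_(u <- rnd_values s) (u - rnd_mean s) ^+ 2 * rnd_law s u =
    rnd_moment2 s - 2 * rnd_mean s * \sum_(u <- rnd_values s) u * rnd_law s u
    + rnd_mean s ^+ 2 * \sum_(u <- rnd_values s) rnd_law s u.
  rewrite (eq_bigr (fun u => u ^+ 2 * rnd_law s u - 2 * rnd_mean s *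
    (u * rnd_law s u) + rnd_mean s ^+ 2 * rnd_law s u)); last by move=> u _; ring.
  by rewrite big_split sumrB /= -!mulr_sumr.
rewrite -/(rnd_mean s) rnd_law_sum1.
have := sqr_ge0 (rnd_mean s); lra.
Qed.

Lemma rnd_norm_le s x : `|rnd s x| <= `|x|.
Proof.
rewrite /rnd /trunc_round; case: ifP => _; last by rewrite normr0.
exact: (grid_round_bounds dl_gt0 x).2.
Qed.

Lemma rnd_err_le s x : `|rnd s x - x| <= tail_part K x + dl.
Proof.
rewrite /rnd /trunc_round; case: ifP => h.
  rewrite distrC; apply: le_trans (grid_round_bounds dl_gt0 x).1 _.
  by rewrite lerDr tail_part_ge0.
have Kx : K < `|x|.
  by apply: le_lt_trans (level_geK s) _; rewrite ltNge h.
by rewrite /tail_part Kx sub0r normrN lerDl (ltW dl_gt0).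
Qed.

Lemma integrable_rnd s : P.-integrable setT (EFin \o (fun w => rnd s (X 0 w))).
Proof.
apply: (le_integrable _ _ _ (finite_measure_integrable_cst P (level s) measurableT)) => //.
  by apply/measurable_EFinP; apply: measurableT_comp => //; exact: measurable_rnd.
move=> w _ /=; rewrite lee_fin.
have c0 : 0 <= level s by apply: le_trans (le_trans ler01 K_ge1) (level_geK s).
rewrite (ger0_norm c0) /rnd /trunc_round; case: ifP => h; last by rewrite normr0.
exact: le_trans (grid_round_bounds dl_gt0 _).2 h.
Qed.

(* As [E X_0 = 0], [rnd_mean s] is the mean rounding error
   [E (rnd s X_0 - X_0)]. *)
Lemma rnd_mean_bound s : `|rnd_mean s| <= r + dl.
Proof.
have mrX : measurable_fun setT (fun w => rnd s (X 0 w)).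
  by apply: measurableT_comp => //; exact: measurable_rnd.
have EX0 : (\int[P]_w (X 0 w)%:E = 0)%E by move: hmean; rewrite unlock.
have mean_diff : (\int[P]_w (rnd s (X 0 w) - X 0 w)%:E = (rnd_mean s)%:E)%E.
  under eq_integral do rewrite EFinB.
  by rewrite integralB_EFin ?integrable_rnd // (integral_rnd s id) EX0 sube0.
have tail_dl : (\int[P]_w (tail_part K (X 0 w) + dl)%:E = (r + dl)%:E)%E.
  under eq_integral do rewrite EFinD.
  rewrite ge0_integralD //; last 3 first.
  - by move=> w _; rewrite lee_fin tail_part_ge0.
  - exact/measurable_EFinP/measurable_tail_part.
  - by move=> w _; rewrite lee_fin ltW // dl_gt0.
  by rewrite -tail_meanE tail_mean_X0 probability_integral_cst.
rewrite -lee_fin -tail_dl -abse_EFin -mean_diff.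
apply: le_trans (le_abse_integral _ _ _) _ => //.
  apply/measurable_EFinP; apply: measurable_funB => //.
under eq_integral do rewrite abse_EFin.
apply: ge0_le_integral => //.
- apply/measurable_EFinP; apply: measurableT_comp => //.
  exact: measurable_funB.
- apply/measurable_EFinP; apply: measurable_funD => //.
  exact: measurable_tail_part.
- by move=> w _; rewrite lee_fin rnd_err_le.
Qed.

Lemma rnd_sqr_le s x : rnd s x ^+ 2 <= x ^+ 2.
Proof.
rewrite -[rnd s x ^+ 2]real_normK ?num_real // -[x ^+ 2]real_normK ?num_real //.
by rewrite lerXn2r ?nnegrE // rnd_norm_le.
Qed.

Lemma weighted_rnd_sqr_sum_le n x :
  \sum_(s < n) (gamma + s.+1%:R)^-1 ^+ 2 * rnd s x ^+ 2 <=
  K ^+ 2 / gamma + 3 * tail_part K x.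
Proof.
have Kg : 0 <= K ^+ 2 / gamma by rewrite divr_ge0 ?sqr_ge0 // ltW.
rewrite /tail_part; case: ifP => hx; last first.
  apply: (le_trans (y := \sum_(s < n) (gamma + s.+1%:R)^-1 ^+ 2 * K ^+ 2)).
    apply: ler_sum => s _; rewrite ler_wpM2l ?sqr_ge0 //.
    have xK : `|x| <= K by rewrite leNgt hx.
    have K0 : 0 <= K by apply: le_trans ler01 K_ge1.
    apply: le_trans (rnd_sqr_le s x) _.
    by rewrite -[x ^+ 2]real_normK ?num_real // lerXn2r ?nnegrE.
  rewrite -mulr_suml mulr0 addr0 mulrC ler_wpM2l ?sqr_ge0 //.
  exact: sum_sqr_inv_le.
have x1 : 1 <= `|x| by apply: le_trans K_ge1 (ltW hx).
(* Terms with [gamma + s.+1 < |x|] vanish, since then [x] exceeds its level. *)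
apply: le_trans (_ : \sum_(s < n) (if `|x| <= gamma + s.+1%:R then
    (gamma + s.+1%:R)^-1 ^+ 2 else 0) * x ^+ 2 <= _).
  apply: ler_sum => s _; case: ifP => h.
    by rewrite ler_wpM2l ?sqr_ge0 // rnd_sqr_le.
  have -> : rnd s x = 0.
    rewrite /rnd /trunc_round ifF //; apply/negbTE; rewrite -ltNge gt_max hx /=.
    by rewrite ltNge h.
  by rewrite expr0n /= mulr0 mul0r.
rewrite -mulr_suml -[x ^+ 2]real_normK ?num_real // expr2.
have x0 : 0 < `|x| by lra.
apply: le_trans (_ : 3 / `|x| * (`|x| * `|x|) <= _).
  by rewrite ler_wpM2r ?mulr_ge0 // sum_sqr_inv_ge_le.
rewrite mulrA mulfVK ?gt_eqF //; lra.
Qed.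

Lemma weighted_moment2_sumE n :
  (\sum_(s < n) (gamma + s.+1%:R)^-1 ^+ 2 * rnd_moment2 s)%:E =
  (\int[P]_w (\sum_(s < n)
     ((gamma + s.+1%:R)^-1 ^+ 2 * rnd s (X 0 w) ^+ 2)%:E))%E.
Proof.
have mrX2 s : measurable_fun setT (fun w => rnd s (X 0 w) ^+ 2).
  by apply: measurable_funX; apply: measurableT_comp => //; exact: measurable_rnd.
rewrite ge0_integral_sum //; last 2 first.
- by move=> s; apply/measurable_EFinP; exact: measurable_funM.
- by move=> s w _; rewrite lee_fin mulr_ge0 ?sqr_ge0.
rewrite -sumEFin; apply: eq_bigr => s _.
under eq_integral do rewrite EFinM.
rewrite ge0_integralZl //; last 3 first.
- exact/measurable_EFinP.
- by move=> w _; rewrite lee_fin sqr_ge0.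
- by rewrite lee_fin sqr_ge0.
by rewrite (integral_rnd s (fun u => u ^+ 2)) EFinM.
Qed.

Lemma weighted_moment2_sum_le n :
  \sum_(s < n) (gamma + s.+1%:R)^-1 ^+ 2 * rnd_moment2 s <=
  K ^+ 2 / gamma + 3 * r.
Proof.
have mtail := measurable_tail_part (X 0) K.
rewrite -lee_fin weighted_moment2_sumE.
apply: le_trans (_ : (\int[P]_w (K ^+ 2 / gamma + 3 * tail_part K (X 0 w))%:E
  <= _)%E).
  apply: ge0_le_integral => //.
  - by move=> w _; rewrite sume_ge0 // => s _; rewrite lee_fin mulr_ge0 ?sqr_ge0.
  - apply: emeasurable_sum => s; apply/measurable_EFinP.
    apply: measurable_funM => //; apply: measurable_funX.
    by apply: measurableT_comp => //; exact: measurable_rnd.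
  - by apply/measurable_EFinP; apply: measurable_funD => //; exact: measurable_funM.
  - by move=> w _; rewrite sumEFin lee_fin weighted_rnd_sqr_sum_le.
rewrite (eq_integral (fun w => (K ^+ 2 / gamma)%:E +
  3%:E * (tail_part K (X 0 w))%:E))%E; last by move=> w _; rewrite EFinD EFinM.
have mtailE : measurable_fun setT (fun w => (tail_part K (X 0 w))%:E).
  exact/measurable_EFinP.
have tail0 w : setT w -> (0 <= (tail_part K (X 0 w))%:E)%E.
  by rewrite lee_fin tail_part_ge0.
rewrite ge0_integralD //; last 3 first.
- by move=> w _; rewrite lee_fin divr_ge0 ?sqr_ge0 // ltW.
- by move=> w _; rewrite mule_ge0 ?tail0.
- exact: emeasurable_funM.
rewrite ge0_integralZl //.
by rewrite -tail_meanE tail_mean_X0 probability_integral_cst -EFinM -EFinD.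
Qed.

Lemma count_level_lt_le n y :
  \sum_(s < n) (if level s < `|y| then 1 else 0) <= tail_part K y.
Proof.
rewrite /tail_part; case: ifP => Ky.
  apply: le_trans (sum_lt_indicator_le n (normr_ge0 y)); apply: ler_sum => s _.
  case: ifP => h; last by case: ifP.
  rewrite ifT //; apply: lt_trans h; apply: lt_le_trans (level_ge s).
  by rewrite ltrDr.
rewrite big1 // => s _; rewrite ifF //; apply/negbTE; rewrite -leNgt.
by apply: le_trans (level_geK s); rewrite leNgt Ky.
Qed.

Lemma measurable_over_level n : measurable (over_level n).
Proof.
have -> : over_level n = \bigcup_(s in [set s | (s < n)%N])
    (X s @^-1` [set y | level s < `|y|]).
  by apply/seteqP; split => om /= [s hs h]; exists s.
apply: bigcup_measurable => s _; apply: measurable_funPTI.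
by apply: measurable_gt_fun; exact: normr_measurable.
Qed.

Lemma prob_over_level_le n : (P (over_level n) <= r%:E)%E.
Proof.
pose L s := [set y : R | level s < `|y|].
pose A s := X s @^-1` L s.
pose B s := X 0 @^-1` L s.
have mL s : measurable (L s).
  by apply: measurable_gt_fun; exact: normr_measurable.
have mB s : measurable_fun setT (\1_(B s) : T -> R).
  exact/measurable_indic/measurable_funPTI.
have -> : over_level n = \big[setU/set0]_(s < n) A s.
  by rewrite -bigcup_mkord; apply/seteqP; split => om /= [s hs h]; exists s.
apply: le_trans (Boole_inequality P (fun s _ => measurable_funPTI (X s) (mL s))) _.
have -> : (\sum_(s < n) P (A s) = \int[P]_w (\sum_(s < n) (\1_(B s) w)%:E))%E.
  rewrite ge0_integral_sum //; last by move=> s; exact/measurable_EFinP.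
  apply: eq_bigr => s _.
  have mBs : measurable (B s) by exact: measurable_funPTI.
  by rewrite integral_indic ?setIT //; exact: hid _ _ (mL s).
rewrite -tail_mean_X0 tail_meanE; apply: ge0_le_integral => //.
- by move=> w _; rewrite sume_ge0 // => s _; rewrite lee_fin.
- by apply: emeasurable_sum => s; exact/measurable_EFinP.
- exact/measurable_EFinP/measurable_tail_part.
move=> w _; rewrite sumEFin lee_fin.
apply: le_trans (count_level_lt_le n (X 0 w)); apply: ler_sum => s _.
by rewrite indicE; case: ifPn => h; [rewrite mem_set|rewrite memNset //; exact/negP].
Qed.

Lemma prob_big_sum_le n :
  (P (big_sum n) <= ((K ^+ 2 / gamma + 3 * r) / (eps / 2) ^+ 2)%:E)%E.
Proof.
have e_gt0 : 0 < eps / 2 by rewrite divr_gt0.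
have w_gt0 t : 0 < weight t by rewrite invr_gt0 ltr_wpDr.
have w_nonincr t : weight t.+1 <= weight t.
  by rewrite lef_pV2 ?posrE ?ltr_wpDr // lerD2l ler_nat.
apply: le_trans (hajek_renyi_discrete n e_gt0 w_gt0 w_nonincr measurable_centered
  centered_in_values centered_mass_sum1 centered_mass_mean0 hind) _.
rewrite lee_fin ler_pM2r ?invr_gt0 ?exprn_gt0 //.
apply: le_trans (weighted_moment2_sum_le n); apply: ler_sum => s _.
by rewrite ler_wpM2l ?sqr_ge0 // sigma2_le_moment2.
Qed.

(* Rounding and centering cost [dl + (r + dl) = eps / 2 + r] per step, which
   leaves [eps / 2] for the centered sums. *)
Lemma centered_err_le s x : `|x| <= level s -> `|x - centered s x| <= eps / 2 + r.
Proof.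
move=> hx; have -> : x - centered s x = (x - rnd s x) + rnd_mean s.
  by rewrite /centered; ring.
apply: le_trans (ler_normD _ _) _.
have -> : eps / 2 + r = dl + (r + dl) by rewrite /dl; field.
apply: lerD (rnd_mean_bound s).
by rewrite /rnd /trunc_round hx; exact: (grid_round_bounds dl_gt0 x).1.
Qed.

Lemma large_average_cases n t om : (t <= n)%N ->
  eps + r < (gamma + t%:R)^-1 * `|\sum_(s < t) X s om| ->
  over_level n om \/ big_sum n om.
Proof.
move=> tn h; have [|below] := pselect (over_level n om); [by left|right].
have small s : (s < t)%N -> `|X s om| <= level s.
  move=> st; rewrite leNgt; apply/negP => h'; apply: below; exists s => //.
  exact: leq_trans st tn.
exists t; split; first by rewrite leq0n tn.
rewrite add0r big_mkord /weight.
set W := (gamma + t%:R)^-1 in h *.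
have W0 : 0 < W by rewrite /W invr_gt0 ltr_wpDr.
have Wt : W * t%:R <= 1.
  by rewrite /W mulrC ler_pdivrMr ?mul1r ?ltr_wpDr // lerDr ltW.
have err : `|\sum_(s < t) X s om| <=
    `|\sum_(s < t) centered s (X s om)| + t%:R * (eps / 2 + r).
  have -> : \sum_(s < t) X s om = \sum_(s < t) centered s (X s om) +
      \sum_(s < t) (X s om - centered s (X s om)).
    by rewrite -big_split /=; apply: eq_bigr => s _; rewrite addrC subrK.
  apply: le_trans (ler_normD _ _) _; rewrite lerD2l.
  apply: le_trans (ler_norm_sum _ _ _) _.
  apply: le_trans (_ : \sum_(s < t) (eps / 2 + r) <= _).
    by apply: ler_sum => s _; apply: centered_err_le; exact: small.
  by rewrite sumr_const card_ord mulr_natl.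
have er0 : 0 <= eps / 2 + r by rewrite addr_ge0 ?r_ge0 // divr_ge0 // ltW.
have := ler_wpM2l (ltW W0) err; rewrite mulrDr mulrA.
have : W * t%:R * (eps / 2 + r) <= eps / 2 + r by exact: ler_piMl.
lra.
Qed.

Lemma sup_eventE : sup_event = \bigcup_(t in [set t : nat | (1 <= t)%N])
  [set om | eps + r < (gamma + t%:R)^-1 * `|\sum_(s < t) X s om|].
Proof.
rewrite /sup_event tail_mean_X0; apply/seteqP; split => om /=.
  by move=> /ereal_sup_gt[_ [t t1 <-]]; rewrite -EFinD lte_fin; exists t.
move=> [t t1 ht]; apply: lt_le_trans (ereal_sup_ubound _); last by exists t.
by rewrite -EFinD lte_fin.
Qed.

Lemma measurable_sup_event : measurable sup_event.
Proof.
rewrite sup_eventE; apply: bigcup_measurable => t _; apply: measurable_gt_fun.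
apply: measurable_funM => //; apply: measurableT_comp => //.
by apply: measurable_sum => s; exact: measurable_funPT.
Qed.

Lemma prob_sup_le :
  (P sup_event <= (r + (K ^+ 2 / gamma + 3 * r) / (eps / 2) ^+ 2)%:E)%E.
Proof.
pose F n := over_level n `|` big_sum n.
have mbig n : measurable (big_sum n).
  exact (measurable_exceed X n (eps / 2) weight measurable_centered 0 0).
have mF n : measurable (F n) by apply: measurableU; [exact: measurable_over_level|].
have F_le n : (P (F n) <= (r + (K ^+ 2 / gamma + 3 * r) / (eps / 2) ^+ 2)%:E)%E.
  apply: le_trans (measureU2 _ (measurable_over_level n) (mbig n)) _.
  by rewrite EFinD leeD // ?prob_over_level_le ?prob_big_sum_le.
have F_nd : {homo F : n m / (n <= m)%N >-> (n <= m)%O}.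
  move=> n m nm; apply/subsetPset => om [[s sn h]|[t [/andP[_ tn] h]]].
    by left; exists s => //; exact: leq_trans sn nm.
  by right; exists t; rewrite (leq_trans tn nm).
have sub : sup_event `<=` \bigcup_n F n.
  by rewrite sup_eventE => om [t _ ht]; exists t => //; exact: large_average_cases ht.
have mU : measurable (\bigcup_n F n) by exact: bigcup_measurable.
apply: le_trans (le_measure _ _ _ sub) _.
- by rewrite inE; exact: measurable_sup_event.
- by rewrite inE.
have F_cvg := nondecreasing_cvg_mu (mu := P) mF mU F_nd.
apply: (le_trans (y := lim ((P \o F) x @[x --> \oo]))).
  by rewrite (cvg_lim _ F_cvg).
by apply: lime_le; [exact: cvgP F_cvg|exact: nearW].
Qed.

End maximal_inequality.

Theorem mainTheorem6 (d : measure_display) (T : measurableType d) (R : realType)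
  (P : probability T R) (X : nat -> {RV P >-> R})
  (hiid : iid X)
  (hint : P.-integrable setT (EFin \o X 0%N))
  (hmean : ('E_P[X 0%N] = 0)%E)
  (eps gamma K : R) (heps : 0 < eps) (hgamma : 0 < gamma) (hK : 1 <= K) :
  (P [set w | (eps%:E + tail_mean (X 0%N) K <
        ereal_sup [set ((gamma + t%:R)^-1 * `|\sum_(s < t) X s w|)%:E
                   | t in [set t : nat | (1 <= t)%N]])%E]
   <= (8 * K ^+ 2 / (gamma * eps ^+ 2))%:E
      + (16 / eps ^+ 2 + 2)%:E * tail_mean (X 0%N) K)%E.
Proof.
case: hiid => hind hid.
apply: le_trans (prob_sup_le hind hid hint hmean heps hgamma hK) _.
have := tail_mean_fin_num K hint; have := tail_mean_ge0 (X 0%N) K.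
move: (tail_mean (X 0%N) K) => [r| |] //=; rewrite lee_fin => r_ge0 _.
rewrite -EFinM -EFinD lee_fin.
have eps2 : 0 < eps ^+ 2 by rewrite exprn_gt0.
set z := (eps ^+ 2)^-1; have z_gt0 : 0 < z by rewrite invr_gt0.
set A := K ^+ 2 / gamma.
have A_ge0 : 0 <= A by rewrite divr_ge0 ?sqr_ge0 // ltW.
have -> : (A + 3 * r) / (eps / 2) ^+ 2 = 4 * A * z + 12 * r * z.
  by rewrite /z; field; rewrite gt_eqF.
have -> : 8 * K ^+ 2 / (gamma * eps ^+ 2) = 8 * A * z.
  by rewrite /A /z; field; rewrite !gt_eqF.
have : 0 <= A * z by rewrite mulr_ge0 // ltW.
have : 0 <= r * z by rewrite mulr_ge0 // ltW.
rewrite mulrDl -/z; nra.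
Qed.
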